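(* Let $N\ge1$, $\sigma\ge0$, and let $(x_i(t),v_i(t))_{i=1}^N$, $t\ge 0$, be a solution of $$\dot x_i=v_i,\qquad \dot v_i=-\frac{\|v_i\|^2}{\|x_i\|^2}x_i+\sum_{j=1}^N\frac{\psi_{ij}}{N}\big(R(x_j,x_i)v_j-v_i\big)+\sum_{k=1}^N\frac{\sigma}{N}\big(\|x_i\|^2x_k-\langle x_i,x_k\rangle x_i\big),$$ where the $\psi_{ij}$ are nonnegative bounded functions for all $i,j\in\{1,\dots,N\}$. Assume the initial data satisfy $\langle v_i(0),x_i(0)\rangle=0$ and $\|x_i(0)\|=1$ for all $i$. Then for all $i\in\{1,\dots,N\}$ and all $t>0$, $$\langle v_i(t),x_i(t)\rangle=0\quad\text{and}\quad \|x_i(t)\|=1.$$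
   Context: $\|\cdot\|$ is the Euclidean norm and $\langle\cdot,\cdot\rangle$ the standard inner product on $\mathbb{R}^3$; $\mathbb{S}^2$ is the unit sphere. For column vectors $x_1,x_2\in\mathbb{S}^2$ with $x_1\neq -x_2$, the rotation matrix is $R(x_1,x_2)=I$ if $x_1=x_2$, and otherwise $$R(x_1,x_2)=\langle x_1,x_2\rangle I-x_1x_2^T+x_2x_1^T+(1-\langle x_1,x_2\rangle)\,u u^T,\qquad u=\frac{x_1\times x_2}{\|x_1\times x_2\|}.$$ When $x_j=-x_i$ the term $\psi_{ij}R(x_j,x_i)v_j$ is taken to be $0$. *)

From HB Require Import structures.
From mathcomp Require Import all_boot all_order all_algebra.
From mathcomp Require Import all_classical all_reals all_analysis.
Set Implicit Arguments. Unset Strict Implicit. Unset Printing Implicit Defensive.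
Import Order.TTheory GRing.Theory Num.Theory.
Import numFieldNormedType.Exports.
Local Open Scope ring_scope.

Section Defs.
Variable R : realType.

Definition dot (a b : 'cV[R]_3) : R := \sum_(i < 3) a i 0 * b i 0.

Definition enorm (a : 'cV[R]_3) : R := Num.sqrt (dot a a).

Definition cross (a b : 'cV[R]_3) : 'cV[R]_3 :=
  \col_(i < 3)
    (if val i == 0%N then a 1 0 * b 2 0 - a 2 0 * b 1 0
     else if val i == 1%N then a 2 0 * b 0 0 - a 0 0 * b 2 0
     else a 0 0 * b 1 0 - a 1 0 * b 0 0).

Definition rotR (x1 x2 : 'cV[R]_3) : 'M[R]_3 :=
  if x1 == x2 then 1%:M
  else let u := (enorm (cross x1 x2))^-1 *: cross x1 x2 in
       (dot x1 x2)%:M - x1 *m x2^T + x2 *m x1^T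
       + (1 - dot x1 x2) *: (u *m u^T).

Definition align_term (xj xi vj : 'cV[R]_3) : 'cV[R]_3 :=
  if xj == - xi then 0 else rotR xj xi *m vj.

Definition vel_rhs (N : nat) (sigma : R) (psi : 'I_N -> 'I_N -> R -> R)
  (x v : 'I_N -> R -> 'cV[R]_3) (i : 'I_N) (t : R) : 'cV[R]_3 :=
  - ((enorm (v i t)) ^+ 2 / (enorm (x i t)) ^+ 2) *: x i t
  + \sum_(j < N) (psi i j t / N%:R) *: (align_term (x j t) (x i t) (v j t) - v i t)
  + \sum_(k < N) (sigma / N%:R) *:
        ((enorm (x i t)) ^+ 2 *: x k t - dot (x i t) (x k t) *: x i t).

End Defs.

From HB Require Import structures.
From mathcomp Require Import all_boot all_order all_algebra.
From mathcomp Require Import all_classical all_reals all_analysis.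
From mathcomp Require Import ring lra.
Import Order.TTheory GRing.Theory Num.Theory.
Import numFieldNormedType.Exports.
Local Open Scope classical_set_scope.
Local Open Scope ring_scope.

(* Write a_i = <v_i, x_i>, b_i = |x_i|^2 and E = \sum_i (a_i^2 + (b_i - 1)^2); the
   claim is E(t) = 0 for t > 0.  Along the flow b_i' = 2 a_i, and whenever x_i <> 0
   the curvature term of the velocity equation cancels |v_i|^2 while the
   sigma-interaction is orthogonal to x_i, so that
   a_i' = \sum_j psi_ij / N (<R(x_j, x_i) v_j, x_i> - a_i), where the rotated
   velocity contributes 0, a_j or b_i a_j.  While E < 1/4 we have 1/2 <= b_i <= 3/2,
   hence E' <= N (4 M + 2) E, with M a bound on the psi_ij.  As E(0) = 0, a Gronwall
   argument (E e^{-Ct} does not increase while E stays small) forces E = 0. *)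

Section DotAlgebra.
Context {R : realType}.
Implicit Types a b c : 'cV[R]_3.

Lemma big_ord3 (F : 'I_3 -> R) : \sum_(i < 3) F i = F 0 + F 1 + F 2.
Proof.
rewrite !big_ord_recl big_ord0 addr0 addrA.
by congr (_ + _ + _); congr F; apply: val_inj.
Qed.

Lemma dotE a b : dot a b = a 0 0 * b 0 0 + a 1 0 * b 1 0 + a 2 0 * b 2 0.
Proof. exact: big_ord3. Qed.

Lemma dotC a b : dot a b = dot b a.
Proof. by rewrite !dotE; ring. Qed.

Lemma dotDl a b c : dot (a + b) c = dot a c + dot b c.
Proof. by rewrite !dotE !mxE; ring. Qed.

Lemma dotZl k a c : dot (k *: a) c = k * dot a c.
Proof. by rewrite !dotE !mxE; ring. Qed.

Lemma dotBl a b c : dot (a - b) c = dot a c - dot b c.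
Proof. by rewrite dotDl -scaleN1r dotZl mulN1r. Qed.

Lemma dot_suml n (F : 'I_n -> 'cV[R]_3) c :
  dot (\sum_(j < n) F j) c = \sum_(j < n) dot (F j) c.
Proof.
rewrite /dot exchange_big; apply: eq_bigr => k _.
by rewrite summxE mulr_suml.
Qed.

Lemma dot_ge0 a : 0 <= dot a a.
Proof. by rewrite dotE -!expr2 !addr_ge0 ?sqr_ge0. Qed.

Lemma sqr_enorm a : enorm a ^+ 2 = dot a a.
Proof. by rewrite sqr_sqrtr // dot_ge0. Qed.

Lemma dot_rotR a b c :
  dot (rotR a b *m c) b = if a == b then dot c a else dot b b * dot c a.
Proof.
rewrite /rotR; case: eqP => [->|_]; first by rewrite mul1mx.
have ord0E : ord0 = 0 :> 'I_1 by apply: val_inj.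
by rewrite !dotE !(mxE, big_ord3, big_ord1) /= !ord0E; ring.
Qed.

Lemma dot_align_term a b c : dot (align_term a b c) b =
  if a == - b then 0 else if a == b then dot c a else dot b b * dot c a.
Proof.
rewrite /align_term; case: eqP => _; last exact: dot_rotR.
by rewrite -(scale0r 0) dotZl mul0r.
Qed.

End DotAlgebra.

Section DotCalculus.
Context {R : realType}.

Lemma is_derive_entry {m n} {f : R -> 'M[R]_(m, n)} {t : R} {df} k l :
  is_derive t 1 f df -> is_derive t (1 : R) (fun s => f s k l) (df k l).
Proof.
move=> [f_derivable fdf].
have : (fun h : R => h^-1 *: ((f \o shift t) (h *: 1) - f t)) @ 0^' --> df.
  by rewrite -fdf; exact: f_derivable.
move=> /(continuous_cvg _ (@coord_continuous R m n k l df)) entry_cvg.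
have {}entry_cvg : (fun h : R => h^-1 *: (((fun s => f s k l) \o shift t) (h *: 1)
    - f t k l)) @ 0^' --> df k l.
  by apply: cvg_trans entry_cvg; apply: near_eq_cvg; near=> h; rewrite /= !mxE.
by apply: DeriveDef; [exact: (cvgP _ entry_cvg) | exact: cvg_lim entry_cvg].
Unshelve. all: by end_near.
Qed.

Lemma is_derive_dot {f g : R -> 'cV[R]_3} {t : R} {df dg} :
  is_derive t 1 f df -> is_derive t 1 g dg ->
  is_derive t (1 : R) (fun s => dot (f s) (g s)) (dot df (g t) + dot (f t) dg).
Proof.
move=> fdf gdg.
have entry k : is_derive t (1 : R) ((fun s => f s k 0) * (fun s => g s k 0))
    (f t k 0 *: dg k 0 + g t k 0 *: df k 0).
  by apply: is_deriveM; exact: is_derive_entry.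
have -> : (fun s => dot (f s) (g s)) =
    \sum_(k < 3) ((fun s => f s k 0) * (fun s => g s k 0)).
  by apply/funext => s; rewrite fct_sumE.
suff -> : dot df (g t) + dot (f t) dg =
    \sum_(k < 3) (f t k 0 *: dg k 0 + g t k 0 *: df k 0) by exact: is_derive_sum.
by rewrite /dot -big_split; apply: eq_bigr => k _ /=; rewrite /GRing.scale /=; ring.
Qed.

Lemma cvg_dot {T : Type} {F : set_system T} {FF : Filter F}
  {f g : T -> 'cV[R]_3} {a b} :
  f @ F --> a -> g @ F --> b -> (fun s => dot (f s) (g s)) @ F --> dot a b.
Proof.
move=> fa gb.
apply: (@cvg_big _ _ +%R 0 xpredT add_continuous _ F _ (fun k s => f s k 0 * g s k 0))
  => // k _.
have entry_cvg (h : T -> 'cV[R]_3) (c : 'cV[R]_3) :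
    h @ F --> c -> (fun s => h s k 0) @ F --> c k 0.
  exact: (continuous_cvg _ (@coord_continuous R 3 1 k 0 c)).
by apply: cvgM; exact: entry_cvg.
Qed.

End DotCalculus.

Lemma near_right_bound {R : realType} {s : R} {P : R -> Prop} :
  (\forall u \near s^'+, P u) -> exists2 d, 0 < d & forall u, s < u < s + d -> P u.
Proof.
move=> /nbhs_ballP [d d0 Pd]; exists d => // u /andP[su usd]; apply: Pd => //.
by rewrite /ball /= ltr0_norm ?subr_lt0 // opprB ltrBlDl.
Qed.

Lemma is_derive_cvg {R : realType} {f : R -> R} {t df : R} :
  is_derive t 1 f df -> f @ t --> f t.
Proof. by move=> [f_derivable _]; apply/differentiable_continuous/derivable1_diffP. Qed.

Section Gronwall.
Variables (R : realType) (f df : R -> R) (C delta : R).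
Implicit Types s t u : R.
Hypothesis delta_gt0 : 0 < delta.
Hypothesis f_ge0 : forall t, 0 <= t -> 0 <= f t.
Hypothesis f0 : f 0 = 0.
Hypothesis f_cvg0 : f @ 0^'+ --> f 0.
Hypothesis f_derive : forall t, 0 < t -> is_derive t 1 f (df t).
Hypothesis df_le : forall t, 0 < t -> f t < delta -> df t <= C * f t.

Let g t := expR (- C * t).
Let h t := f t * g t.

Let is_derive_g t : is_derive t 1 g (g t * - C).
Proof.
have lin : is_derive t (1 : R) (fun u : R => - C * u) (- C).
  by apply: is_derive_eq (is_deriveZ (- C) (is_derive_id t 1)) _; rewrite scaler1.
exact: is_derive1_comp.
Qed.

Let is_derive_h t : 0 < t -> is_derive t 1 h (g t * (df t - C * f t)).
Proof.
move=> t0; have -> : h = f * g by [].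
apply: is_derive_eq (is_deriveM (f_derive t t0) (is_derive_g t)) _.
by rewrite /GRing.scale /=; ring.
Qed.

Let f_cvg_right s : 0 <= s -> f @ s^'+ --> f s.
Proof.
rewrite le_eqVlt => /predU1P[<- //|s0].
exact: cvg_at_right_filter (is_derive_cvg (f_derive s s0)).
Qed.

Lemma gronwall_eq0_right s : 0 <= s -> f s = 0 ->
  exists2 d, 0 < d & forall u, s < u < s + d -> f u = 0.
Proof.
move=> s0 fs0; have fs_lt : f s < delta by rewrite fs0.
have [d d0 f_small] : exists2 d, 0 < d & forall u, s < u < s + d -> f u < delta.
  by apply: near_right_bound; move: (f_cvg_right s s0) => /cvgr_lt; apply.
exists d => // u /andP[su usd]; have u0 : 0 < u := le_lt_trans s0 su.
have pos_in c : c \in `]s, u[ -> 0 < c.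
  by rewrite in_itv /= => /andP[sc _]; exact: le_lt_trans s0 sc.
have h_cont : {within `[s, u], continuous h}.
  apply: derivable_oo_LRcontinuous_within; split.
  - by move=> c /pos_in c0; have [] := is_derive_h c c0.
  - apply: cvgM (f_cvg_right s s0) _.
    exact: cvg_at_right_filter (is_derive_cvg (is_derive_g s)).
  - exact: cvg_at_left_filter (is_derive_cvg (is_derive_h u u0)).
have [c /[dup] /pos_in c0] :=
  MVT su (fun c cin => is_derive_h c (pos_in c cin)) h_cont.
rewrite in_itv /= => /andP[sc cu] h_mvt.
have dh_le0 : g c * (df c - C * f c) <= 0.
  rewrite pmulr_rle0 ?expR_gt0 // subr_le0 df_le // f_small //.
  by rewrite sc (lt_trans cu usd).
have : h u - h s <= 0 by rewrite h_mvt mulr_le0_ge0 // subr_ge0 ltW.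
rewrite /h fs0 mul0r subr0 pmulr_lle0 ?expR_gt0 // => fu_le0.
by apply/eqP; rewrite eq_le fu_le0 f_ge0 // ltW.
Qed.

Lemma gronwall_eq0 t : 0 < t -> f t = 0.
Proof.
move=> t0; pose S := [set u | 0 <= u <= t /\ f u = 0].
have S0 : S 0 by split; [rewrite lexx ltW | exact: f0].
have S_le_t : ubound S t by move=> u [/andP[_ ->]].
have supS : has_sup S by split; [exists 0 | exists t].
have s0 : 0 <= sup S := sup_upper_bound supS S0.
have fs0 : f (sup S) = 0.
  move: (s0); rewrite le_eqVlt => /predU1P[<- //|s_gt0].
  apply/eqP; rewrite eq_le f_ge0 // andbT leNgt; apply/negP => fs_gt0.
  have /nbhs_ballP [e e0 f_pos] : \forall u \near sup S, 0 < f u.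
    by move: (is_derive_cvg (f_derive _ s_gt0)) => /cvgr_gt; apply.
  have [u Su su] := sup_adherent e0 supS.
  have us : u <= sup S := sup_upper_bound supS Su.
  have [_ fu0] := Su; suff : 0 < f u by rewrite fu0 ltxx.
  by apply: f_pos; rewrite /ball /= ger0_norm ?subr_ge0 //; lra.
have [d d0 f_right0] := gronwall_eq0_right _ s0 fs0.
have [st|ts] := ltP (sup S) t; last first.
  by have <- : sup S = t by apply/le_anti; rewrite ts ge_sup //; exists 0.
pose u := Num.min (sup S + d / 2) t.
have su : sup S < u by rewrite lt_min st andbT ltrDl divr_gt0.
have ud : u <= sup S + d / 2 by rewrite ge_min lexx.
have : S u.
  split; first by rewrite ge_min lexx orbT andbT (le_trans s0 (ltW su)).
  by apply: f_right0; rewrite su /=; lra.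
by move=> /(sup_upper_bound supS); rewrite leNgt su.
Qed.

End Gronwall.

Section SphereEnergy.
Context {R : realType} {N : nat} (x v : 'I_N -> R -> 'cV[R]_3).
Implicit Types (i j : 'I_N) (t : R).

Definition sphere_energy t : R :=
  \sum_(i < N) (dot (v i t) (x i t) ^+ 2 + (dot (x i t) (x i t) - 1) ^+ 2).

Lemma sphere_energy_ge0 t : 0 <= sphere_energy t.
Proof. by apply: sumr_ge0 => i _; rewrite addr_ge0 ?sqr_ge0. Qed.

Lemma le_sphere_energy i t :
  dot (v i t) (x i t) ^+ 2 + (dot (x i t) (x i t) - 1) ^+ 2 <= sphere_energy t.
Proof.
rewrite /sphere_energy (bigD1 i) //= lerDl.
by apply: sumr_ge0 => j _; rewrite addr_ge0 ?sqr_ge0.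
Qed.

Lemma sphere_energy_eq0P t : sphere_energy t = 0 <->
  forall i, dot (v i t) (x i t) = 0 /\ enorm (x i t) = 1.
Proof.
split=> [E0 i | on_sphere].
  have := le_sphere_energy i t; rewrite E0 => bound.
  have a_sqr := sqr_ge0 (dot (v i t) (x i t)).
  have b_sqr := sqr_ge0 (dot (x i t) (x i t) - 1).
  have a0 : dot (v i t) (x i t) = 0.
    by apply/eqP; rewrite -sqrf_eq0 eq_le sqr_ge0 andbT; lra.
  have b1 : dot (x i t) (x i t) = 1.
    by apply/eqP; rewrite -subr_eq0 -sqrf_eq0 eq_le sqr_ge0 andbT; lra.
  by split=> //; rewrite /enorm b1 sqrtr1.
rewrite /sphere_energy big1 // => i _; have [-> norm1] := on_sphere i.
by rewrite -sqr_enorm norm1 expr1n subrr expr0n addr0.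
Qed.

Lemma sphere_energy_cvg_right t :
  (forall i, x i @ t^'+ --> x i t) -> (forall i, v i @ t^'+ --> v i t) ->
  sphere_energy @ t^'+ --> sphere_energy t.
Proof.
move=> x_cvg v_cvg.
apply: (@cvg_big _ _ +%R 0 xpredT add_continuous _ _ _
  (fun i s => dot (v i s) (x i s) ^+ 2 + (dot (x i s) (x i s) - 1) ^+ 2)) => // i _.
have b_cvg : (fun s => dot (x i s) (x i s) - 1) @ t^'+ --> dot (x i t) (x i t) - 1.
  by apply: cvgB; [exact: cvg_dot | exact: cvg_cst].
by apply: cvgD; apply: cvgM => //; exact: cvg_dot.
Qed.

Lemma is_derive_sphere_energy t (dv : 'I_N -> 'cV[R]_3) :
  (forall i, is_derive t 1 (x i) (v i t)) -> (forall i, is_derive t 1 (v i) (dv i)) ->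
  is_derive t 1 sphere_energy (\sum_(i < N)
    (2 * dot (v i t) (x i t) * (dot (dv i) (x i t) + dot (v i t) (v i t))
     + 4 * (dot (x i t) (x i t) - 1) * dot (v i t) (x i t))).
Proof.
move=> x_der v_der.
have a_der i := is_derive_dot (v_der i) (x_der i).
have b_der i := is_derive_dot (x_der i) (x_der i).
have term_der i := is_deriveD (is_deriveX 2 (a_der i))
  (is_deriveX 2 (is_deriveB (b_der i) (is_derive_cst (1 : R) t 1))).
have -> : sphere_energy = \sum_(i < N) ((fun s => dot (v i s) (x i s)) ^+ 2
    + ((fun s => dot (x i s) (x i s)) - cst 1) ^+ 2).
  by apply/funext => s; rewrite /sphere_energy fct_sumE.
apply: is_derive_eq (is_derive_sum term_der) _.
by apply: eq_bigr => i _; rewrite (dotC (x i t)) /GRing.scale /= !fctE; ring.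
Qed.

End SphereEnergy.

Section FlockingOnSphere.
Context {R : realType} {N : nat} {sigma : R} {psi : 'I_N -> 'I_N -> R -> R}
  {x v : 'I_N -> R -> 'cV[R]_3}.
Implicit Types (i j : 'I_N) (t : R).

Let a i t := dot (v i t) (x i t).
Let b i t := dot (x i t) (x i t).
Let c i j t := dot (align_term (x j t) (x i t) (v j t)) (x i t).
Let E := sphere_energy x v.
Let dE t := \sum_(i < N) (2 * a i t * (dot (vel_rhs sigma psi x v i t) (x i t)
  + dot (v i t) (v i t)) + 4 * (b i t - 1) * a i t).

Lemma dot_vel_rhs i t : b i t != 0 ->
  dot (vel_rhs sigma psi x v i t) (x i t) + dot (v i t) (v i t) =
  \sum_(j < N) psi i j t / N%:R * (c i j t - a i t).
Proof.
move=> b_neq0; rewrite /vel_rhs !dotDl dotZl !dot_suml !sqr_enorm -/(b i t).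
rewrite [X in _ + X + _]big1 => [|k _]; last first.
  by rewrite dotZl dotBl !dotZl (dotC (x i t)) /b; ring.
rewrite mulNr divfK // addr0 addrAC addNr add0r; apply: eq_bigr => j _.
by rewrite dotZl dotBl.
Qed.

Lemma align_gap_le i j t : E t < 1/4 -> a i t * (c i j t - a i t) <= 2 * E t.
Proof.
move=> E_small.
have Ei := le_sphere_energy x v i t; have Ej := le_sphere_energy x v j t.
rewrite -/(a i t) -/(b i t) -/(a j t) -/(b j t) -/E in Ei Ej.
have bi_sqr := sqr_ge0 (b i t - 1); have bj_sqr := sqr_ge0 (b j t - 1).
have aij_le : a i t * a j t <= E t by have := sqr_ge0 (a i t - a j t); nra.
have aij_ge : - (a i t * a j t) <= E t by have := sqr_ge0 (a i t + a j t); nra.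
have bi_le : 1/2 <= b i t <= 3/2 by apply/andP; split; nra.
rewrite /c dot_align_term -/(a j t) -/(b i t).
by do 2?case: ifP => _; nra.
Qed.

Lemma sphere_energy_derive_le (M : R) t : (0 < N)%N ->
  (forall i j, 0 <= psi i j t <= M) -> E t < 1/4 ->
  dE t <= N%:R * (4 * M + 2) * E t.
Proof.
move=> N_gt0 psi_bnd E_small; have E_ge0 := sphere_energy_ge0 x v t.
have N_neq0 : N%:R != 0 :> R by rewrite pnatr_eq0 -lt0n.
have -> : N%:R * (4 * M + 2) * E t = \sum_(i < N) ((4 * M + 2) * E t).
  by rewrite sumr_const card_ord -mulrA mulr_natl.
rewrite /dE; apply: ler_sum => i _.
have Ei := le_sphere_energy x v i t; rewrite -/(a i t) -/(b i t) -/E in Ei.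
have a_sqr := sqr_ge0 (a i t); have b_sqr := sqr_ge0 (b i t - 1).
have b_neq0 : b i t != 0 by apply/eqP => b0; rewrite b0 in Ei b_sqr; nra.
have gap_le :
    a i t * \sum_(j < N) psi i j t / N%:R * (c i j t - a i t) <= 2 * M * E t.
  rewrite mulr_sumr; apply: le_trans (_ : \sum_(j < N) M / N%:R * (2 * E t) <= _).
    apply: ler_sum => j _; have /andP[psi_ge0 psi_le] := psi_bnd i j.
    rewrite mulrCA; apply: le_trans (ler_wpM2l _ (align_gap_le i j t E_small)) _.
      by rewrite divr_ge0.
    by rewrite ler_wpM2r ?mulr_ge0 ?ler_wpM2r ?invr_ge0.
  rewrite sumr_const card_ord -(mulr_natl (M / N%:R * (2 * E t))).
  by rewrite [leLHS](_ : _ = 2 * M * E t) //; field.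
rewrite dot_vel_rhs //; have := sqr_ge0 (b i t - 1 - a i t); nra.
Qed.

Hypothesis N_gt0 : (0 < N)%N.
Context {M : R}.
Hypothesis psi_ge0 : forall i j t, 0 <= t -> 0 <= psi i j t.
Hypothesis psi_le : forall i j t, 0 <= t -> psi i j t <= M.
Hypothesis x_derive : forall i t, 0 < t -> is_derive t 1 (x i) (v i t).
Hypothesis v_derive :
  forall i t, 0 < t -> is_derive t 1 (v i) (vel_rhs sigma psi x v i t).
Hypothesis x_cvg0 : forall i, x i @ 0^'+ --> x i 0.
Hypothesis v_cvg0 : forall i, v i @ 0^'+ --> v i 0.
Hypothesis energy0 : sphere_energy x v 0 = 0.

Lemma sphere_energy_vanishes t : 0 < t -> sphere_energy x v t = 0.
Proof.
apply: (@gronwall_eq0 R _ dE (N%:R * (4 * M + 2)) (1/4)) => //.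
- by move=> s _; exact: sphere_energy_ge0.
- exact: sphere_energy_cvg_right.
- move=> s s0; apply: is_derive_sphere_energy => i.
    exact: x_derive.
  exact: v_derive.
- move=> s s0; apply: sphere_energy_derive_le => // i j.
  by rewrite psi_ge0 ?psi_le ?ltW.
Qed.

End FlockingOnSphere.

Theorem proposition3p2 (R : realType) (N : nat) (sigma : R)
  (psi : 'I_N -> 'I_N -> R -> R) (x v : 'I_N -> R -> 'cV[R]_3) :
  (0 < N)%N ->
  0 <= sigma ->
  (forall i j (t : R), 0 <= t -> 0 <= psi i j t) ->
  (exists M : R, forall i j (t : R), 0 <= t -> psi i j t <= M) ->
  (* (x, v) is a solution on t >= 0: differentiable for t > 0, right-continuous at 0 *)
  (forall i (t : R), 0 < t -> is_derive t 1 (x i) (v i t)) ->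
  (forall i (t : R), 0 < t -> is_derive t 1 (v i) (vel_rhs sigma psi x v i t)) ->
  (forall i, x i @ 0^'+ --> x i 0) ->
  (forall i, v i @ 0^'+ --> v i 0) ->
  (forall i, dot (v i 0) (x i 0) = 0 /\ enorm (x i 0) = 1) ->
  forall i (t : R), 0 < t -> dot (v i t) (x i t) = 0 /\ enorm (x i t) = 1.
Proof.
move=> N_gt0 _ psi_ge0 [M psi_le] x_der v_der x_cvg0 v_cvg0 init i t t_gt0.
have energy0 : sphere_energy x v 0 = 0 by apply/sphere_energy_eq0P.
have := sphere_energy_vanishes N_gt0 psi_ge0 psi_le x_der v_der x_cvg0 v_cvg0
  energy0 t t_gt0.
by move/sphere_energy_eq0P; apply.
Qed.
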